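(* Let $P$ be a program which is safe w.r.t. a mode $M$, let $\mathit{Eqs}$ be a conjunction of equations, and let $G_1$ be a goal without occurrences of disequations. For all goals $G_2$, if there exists a goal $(A',G')$ such that $A'$ is a non-basic atom which does not satisfy $M$ and $(\mathit{Eqs},G_1,G_2)\longmapsto^*_P(A',G')$, then there exists a goal $(A'',G'')$ such that $A''$ is a non-basic atom which does not satisfy $M$ and $(G_1,\mathit{Eqs},G_2)\longmapsto^*_P(A'',G'')$.
   Context: Predicate symbols $\mathit{true}$, $=$, $\neq$ are basic, all others non-basic. Basic atoms: $\mathit{true}$, $t_1=t_2$ (equation), $t_1\neq t_2$ (disequation); non-basic atoms $p(t_1,\dots,t_m)$, $p$ non-basic. A goal is a conjunction of atoms ('','' associative, neutral element $\mathit{true}$). A clause $C$ is $A\leftarrow G$ with non-basic head $hd(C)$ and body $bd(C)$; a program is a set of clauses. All mgu's are relevant and idempotent. A variable $X$ is a local variable of goal $G$ in clause $H\leftarrow G_1,G,G_2$ iff $X\in vars(G)-vars(H,G_1,G_2)$. Operational semantics: (1) $(t_1=t_2,G)\longmapsto_P G\vartheta$ if $t_1,t_2$ unify with mgu $\vartheta$; (2) $(t_1\neq t_2,G)\longmapsto_P G$ if $t_1,t_2$ are not unifiable; (3) $(A,G)\longmapsto_P(bd(C),G)\vartheta$ if $A$ is non-basic, $C$ a renamed apart clause of $P$ and $\vartheta$ an mgu of $A$ and $hd(C)$; $\longmapsto^*_P$ is the reflexive-transitive closure. Modes: a mode for non-basic $p$ of arity $h$ is $p(m_1,\dots,m_h)$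 with $m_i\in\{+,?\}$; $t_i$ is an input argument iff $m_i=+$, and variables in input arguments are input variables; a mode for a program contains exactly one mode for each non-basic predicate occurring in it. An atom satisfies $M$ iff $M$ has a mode for its predicate and its input arguments are ground. A clause $C$ is safe w.r.t. $M$ iff each variable of each disequation $t_1\neq t_2$ in $bd(C)$ is an input variable of $hd(C)$ or a local variable of $t_1\neq t_2$ in $C$; a program is safe iff all its clauses are. *)

From Stdlib Require Import List Arith.
Import ListNotations.

Inductive term : Type :=
| Var : nat -> term
| Fn : nat -> list term -> term.

Fixpoint tvars (t : term) : list nat :=
  match t with
  | Var x => [x]
  | Fn _ ts => flat_map tvars ts
  end.

Definition ground (t : term) : Prop := tvars t = [].

Definition subst := nat -> term.

Fixpoint tsubst (s : subst) (t : term) : term :=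
  match t with
  | Var x => s x
  | Fn f ts => Fn f (map (tsubst s) ts)
  end.

(** The basic atom [true] is the neutral element of ",", so it is
    represented by the empty goal; the remaining basic atoms are equations
    and disequations; [APred p ts] is the non-basic atom p(ts). *)
Inductive atom : Type :=
| AEq : term -> term -> atom
| ANeq : term -> term -> atom
| APred : nat -> list term -> atom.

Definition nonbasic (a : atom) : Prop :=
  match a with APred _ _ => True | _ => False end.

Definition avars (a : atom) : list nat :=
  match a with
  | AEq t1 t2 | ANeq t1 t2 => tvars t1 ++ tvars t2
  | APred _ ts => flat_map tvars ts
  end.

Definition asubst (s : subst) (a : atom) : atom :=
  match a with
  | AEq t1 t2 => AEq (tsubst s t1) (tsubst s t2)
  | ANeq t1 t2 => ANeq (tsubst s t1) (tsubst s t2)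
  | APred p ts => APred p (map (tsubst s) ts)
  end.

Definition goal := list atom.
Definition gvars (g : goal) : list nat := flat_map avars g.
Definition gsubst (s : subst) (g : goal) : goal := map (asubst s) g.

Record clause := mkClause { hd_pred : nat; hd_args : list term; bd : goal }.
Definition hd (c : clause) : atom := APred (hd_pred c) (hd_args c).
Definition cvars (c : clause) : list nat := avars (hd c) ++ gvars (bd c).

Definition program := clause -> Prop.

Definition is_unifier {X : Type} (sub : subst -> X -> X) (s : subst) (a b : X) : Prop :=
  sub s a = sub s b.

Definition dom_var (s : subst) (x : nat) : Prop := s x <> Var x.

Definition relevant {X : Type} (vs : X -> list nat) (s : subst) (a b : X) : Prop :=
  (forall x, dom_var s x -> In x (vs a ++ vs b)) /\
  (forall x y, dom_var s x -> In y (tvars (s x)) -> In y (vs a ++ vs b)).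

Definition idempotent (s : subst) : Prop :=
  forall x, tsubst s (s x) = s x.

Definition is_mgu {X : Type} (sub : subst -> X -> X) (s : subst) (a b : X) : Prop :=
  is_unifier sub s a b /\
  (forall s', is_unifier sub s' a b ->
     exists e, forall x, s' x = tsubst e (s x)).

Definition rel_idem_mgu {X : Type} (sub : subst -> X -> X) (vs : X -> list nat)
  (s : subst) (a b : X) : Prop :=
  is_mgu sub s a b /\ relevant vs s a b /\ idempotent s.

Definition unifiable (t1 t2 : term) : Prop := exists s, tsubst s t1 = tsubst s t2.

Definition rename_subst (r : nat -> nat) : subst := fun x => Var (r x).
Definition rename_clause (r : nat -> nat) (c : clause) : clause :=
  mkClause (hd_pred c) (map (tsubst (rename_subst r)) (hd_args c))
           (gsubst (rename_subst r) (bd c)).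

Definition renamed_apart (P : program) (g : goal) (c' : clause) : Prop :=
  exists c r, P c /\ (forall x y, r x = r y -> x = y) /\ c' = rename_clause r c /\
    (forall x, In x (cvars c') -> ~ In x (gvars g)).

Inductive step (P : program) : goal -> goal -> Prop :=
| step_eq : forall t1 t2 G s,
    rel_idem_mgu tsubst tvars s t1 t2 ->
    step P (AEq t1 t2 :: G) (gsubst s G)
| step_neq : forall t1 t2 G,
    ~ unifiable t1 t2 ->
    step P (ANeq t1 t2 :: G) G
| step_pred : forall p ts G c s,
    renamed_apart P (APred p ts :: G) c ->
    rel_idem_mgu asubst avars s (APred p ts) (hd c) ->
    step P (APred p ts :: G) (gsubst s (bd c ++ G)).

Inductive steps (P : program) : goal -> goal -> Prop :=
| steps_refl : forall G, steps P G G
| steps_trans : forall G1 G2 G3, step P G1 G2 -> steps P G2 G3 -> steps P G1 G3.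

(** Modes: [M p = Some ms] is the (unique) mode of the predicate [p];
    [true] stands for "+" (input) and [false] for "?". *)
Definition mode := nat -> option (list bool).

(** Input arguments of [p(ts)] w.r.t. [M] (none if [M] has no mode for [p]
    of the right arity). *)
Definition input_args (M : mode) (p : nat) (ts : list term) : list term :=
  match M p with
  | Some ms =>
      if Nat.eqb (length ms) (length ts)
      then map snd (filter (fun bt => fst bt) (combine ms ts))
      else []
  | None => []
  end.

Definition satisfies (M : mode) (a : atom) : Prop :=
  match a with
  | APred p ts =>
      (exists ms, M p = Some ms /\ length ms = length ts) /\
      (forall t, In t (input_args M p ts) -> ground t)
  | _ => False
  end.

Definition input_var_of_head (M : mode) (c : clause) (x : nat) : Prop :=
  In x (flat_map tvars (input_args M (hd_pred c) (hd_args c))).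

Definition safe_clause (M : mode) (c : clause) : Prop :=
  forall B1 B2 t1 t2, bd c = B1 ++ ANeq t1 t2 :: B2 ->
    forall x, In x (tvars t1 ++ tvars t2) ->
      input_var_of_head M c x \/
      ~ In x (avars (hd c) ++ gvars B1 ++ gvars B2).

Definition safe (M : mode) (P : program) : Prop :=
  forall c, P c -> safe_clause M c.

Definition is_disequation (a : atom) : Prop :=
  match a with ANeq _ _ => True | _ => False end.

(* Solving [Eqs] first turns [(Eqs, G1, G2)] into [S = (G1, G2) theta], theta an mgu of
   [Eqs].  We show, by induction on the floundering derivation from [S], that every goal
   [(H, E, K)] whose most general [E]-instance is a variant of [S] flounders as well,
   provided the disequations of [H] share no variable with the other atoms of [H] nor
   with [E].  The first atom of [H] is resolved just as its instance in [S]: an equation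
   by an mgu through which the one of the derivation factors, an atom satisfying [M] with
   a fresh variant of the same clause (the lifting lemma), and a disequation fails to
   unify because [E] does not touch its variables; when [H] is empty, solving [E] leads
   back to a variant of [S].  Safety is what keeps the disequations isolated: a variable
   of a body disequation is either an input variable, ground once the selected atom
   satisfies [M], or local to that disequation.  Since [G1] contains no disequation,
   [(G1, Eqs, G2)] flounders. *)

From Pilot Require Import Defs.
From Stdlib Require Import List Arith Lia Wf_nat Classical.
Import ListNotations.

Definition scomp (s1 s2 : subst) : subst := fun x => tsubst s2 (s1 x).

Fixpoint term_nested_ind (Q : term -> Prop) (HVar : forall x, Q (Var x))
  (HFn : forall f ts, Forall Q ts -> Q (Fn f ts)) (t : term) : Q t :=
  match t with
  | Var x => HVar x
  | Fn f ts =>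
      HFn f ts ((fix all_ts (l : list term) : Forall Q l :=
        match l with
        | [] => Forall_nil Q
        | u :: l' => Forall_cons u (term_nested_ind Q HVar HFn u) (all_ts l')
        end) ts)
  end.

Lemma tsubst_ext (s s' : subst) (t : term) :
  (forall x, In x (tvars t) -> s x = s' x) -> tsubst s t = tsubst s' t.
Proof.
  induction t as [x|f ts IH] using term_nested_ind; simpl; intros Hss'.
  - apply Hss'; left; reflexivity.
  - f_equal; apply map_ext_in; intros u Hu.
    rewrite Forall_forall in IH; apply IH; [exact Hu|].
    intros x Hx; apply Hss', in_flat_map; eauto.
Qed.

Lemma tsubst_comp (s1 s2 : subst) (t : term) :
  tsubst s2 (tsubst s1 t) = tsubst (scomp s1 s2) t.
Proof.
  induction t as [x|f ts IH] using term_nested_ind; simpl; [reflexivity|].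
  f_equal; rewrite map_map; apply map_ext_in; intros u Hu.
  rewrite Forall_forall in IH; auto.
Qed.

Lemma in_tvars_tsubst (s : subst) (t : term) (z : nat) :
  In z (tvars (tsubst s t)) <-> exists y, In y (tvars t) /\ In z (tvars (s y)).
Proof.
  induction t as [x|f ts IH] using term_nested_ind; simpl.
  - split; [eauto | intros [y [[<-|[]] Hz]]; exact Hz].
  - rewrite Forall_forall in IH; rewrite in_flat_map; split.
    + intros [v [Hv Hz]]; apply in_map_iff in Hv as [u [<- Hu]].
      apply IH in Hz as [y [Hy Hz]]; [|exact Hu].
      exists y; split; [apply in_flat_map; eauto | exact Hz].
    + intros [y [Hy Hz]]; apply in_flat_map in Hy as [u [Hu Hy]].
      exists (tsubst s u); split; [apply in_map, Hu | apply IH; eauto].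
Qed.

Lemma tsubst_id_on (s : subst) (t : term) :
  (forall x, In x (tvars t) -> s x = Var x) -> tsubst s t = t.
Proof.
  induction t as [x|f ts IH] using term_nested_ind; simpl; intros Hs.
  - apply Hs; left; reflexivity.
  - f_equal; rewrite <- (map_id ts) at 2; apply map_ext_in; intros u Hu.
    rewrite Forall_forall in IH; apply IH; [exact Hu|].
    intros x Hx; apply Hs, in_flat_map; eauto.
Qed.

Lemma tsubst_ground (s : subst) (t : term) : ground t -> tsubst s t = t.
Proof. intros Ht; apply tsubst_id_on; rewrite Ht; intros x []. Qed.

Lemma asubst_ext (s s' : subst) (a : atom) :
  (forall x, In x (avars a) -> s x = s' x) -> asubst s a = asubst s' a.
Proof.
  destruct a as [t1 t2|t1 t2|p ts]; simpl; intros Hss'.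
  1,2: f_equal; apply tsubst_ext; intros x Hx; apply Hss', in_app_iff; auto.
  f_equal; apply map_ext_in; intros u Hu; apply tsubst_ext.
  intros x Hx; apply Hss', in_flat_map; eauto.
Qed.

Lemma asubst_comp (s1 s2 : subst) (a : atom) :
  asubst s2 (asubst s1 a) = asubst (scomp s1 s2) a.
Proof.
  destruct a; simpl; rewrite ?tsubst_comp; try reflexivity.
  f_equal; rewrite map_map; apply map_ext; apply tsubst_comp.
Qed.

Lemma in_avars_asubst (s : subst) (a : atom) (z : nat) :
  In z (avars (asubst s a)) <-> exists y, In y (avars a) /\ In z (tvars (s y)).
Proof.
  destruct a as [t1 t2|t1 t2|p ts]; simpl.
  3: exact (in_tvars_tsubst s (Fn p ts) z).
  all: rewrite in_app_iff, !in_tvars_tsubst; split;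
    [ intros [[y [Hy Hz]]|[y [Hy Hz]]]; exists y; rewrite in_app_iff; auto
    | intros [y [Hy Hz]]; apply in_app_iff in Hy as [Hy|Hy]; eauto ].
Qed.

Lemma asubst_var (a : atom) : asubst Var a = a.
Proof.
  destruct a as [t1 t2|t1 t2|p ts]; simpl; rewrite ?(tsubst_id_on Var) by auto; f_equal.
  rewrite <- (map_id ts) at 2; apply map_ext; intros t; apply tsubst_id_on; auto.
Qed.

Lemma gsubst_var (g : goal) : gsubst Var g = g.
Proof. rewrite <- (map_id g) at 2; apply map_ext, asubst_var. Qed.

Lemma gsubst_ext (s s' : subst) (g : goal) :
  (forall x, In x (gvars g) -> s x = s' x) -> gsubst s g = gsubst s' g.
Proof.
  intros Hss'; apply map_ext_in; intros a Ha; apply asubst_ext.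
  intros x Hx; apply Hss', in_flat_map; eauto.
Qed.

Lemma gsubst_comp (s1 s2 : subst) (g : goal) :
  gsubst s2 (gsubst s1 g) = gsubst (scomp s1 s2) g.
Proof. unfold gsubst; rewrite map_map; apply map_ext; apply asubst_comp. Qed.

Lemma gsubst_app (s : subst) (g1 g2 : goal) :
  gsubst s (g1 ++ g2) = gsubst s g1 ++ gsubst s g2.
Proof. apply map_app. Qed.

Lemma in_gvars (g : goal) (z : nat) :
  In z (gvars g) <-> exists a, In a g /\ In z (avars a).
Proof. apply in_flat_map. Qed.

Lemma in_gvars_app (g1 g2 : goal) (z : nat) :
  In z (gvars (g1 ++ g2)) <-> In z (gvars g1) \/ In z (gvars g2).
Proof. unfold gvars; rewrite flat_map_app; apply in_app_iff. Qed.

Lemma in_gvars_gsubst (s : subst) (g : goal) (z : nat) :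
  In z (gvars (gsubst s g)) <-> exists y, In y (gvars g) /\ In z (tvars (s y)).
Proof.
  rewrite in_gvars; split.
  - intros [a [Ha Hz]]; apply in_map_iff in Ha as [b [<- Hb]].
    apply in_avars_asubst in Hz as [y [Hy Hz]].
    exists y; split; [apply in_gvars; eauto | exact Hz].
  - intros [y [Hy Hz]]; apply in_gvars in Hy as [b [Hb Hy]].
    exists (asubst s b); split; [apply in_map, Hb | apply in_avars_asubst; eauto].
Qed.
Definition eq_goal (E : list (term * term)) : goal :=
  map (fun e => AEq (fst e) (snd e)) E.

Definition sys_vars (E : list (term * term)) : list nat := gvars (eq_goal E).

Definition sys_subst (s : subst) (E : list (term * term)) : list (term * term) :=
  map (fun e => (tsubst s (fst e), tsubst s (snd e))) E.

Definition unifies (s : subst) (E : list (term * term)) : Prop :=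
  Forall (fun e => tsubst s (fst e) = tsubst s (snd e)) E.

Lemma gsubst_eq_goal (s : subst) (E : list (term * term)) :
  gsubst s (eq_goal E) = eq_goal (sys_subst s E).
Proof. unfold gsubst, eq_goal, sys_subst; rewrite !map_map; reflexivity. Qed.

Lemma in_sys_vars_cons (u v : term) (E : list (term * term)) (z : nat) :
  In z (sys_vars ((u, v) :: E)) <->
  In z (tvars u) \/ In z (tvars v) \/ In z (sys_vars E).
Proof. unfold sys_vars; simpl; rewrite !in_app_iff; tauto. Qed.

Lemma in_sys_vars_app (E1 E2 : list (term * term)) (z : nat) :
  In z (sys_vars (E1 ++ E2)) <-> In z (sys_vars E1) \/ In z (sys_vars E2).
Proof. unfold sys_vars, eq_goal; rewrite map_app; apply in_gvars_app. Qed.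

Lemma sys_vars_single (t1 t2 : term) : sys_vars [(t1, t2)] = tvars t1 ++ tvars t2.
Proof. unfold sys_vars; simpl; apply app_nil_r. Qed.

Lemma unifies_app (s : subst) (E1 E2 : list (term * term)) :
  unifies s (E1 ++ E2) <-> unifies s E1 /\ unifies s E2.
Proof. apply Forall_app. Qed.

Lemma unifies_ext (s s' : subst) (E : list (term * term)) :
  (forall x, In x (sys_vars E) -> s x = s' x) -> unifies s E -> unifies s' E.
Proof.
  intros Hss' HE; unfold unifies in *; rewrite Forall_forall in *.
  intros [u v] Huv; specialize (HE _ Huv); simpl in *.
  assert (Hvars : forall x, In x (tvars u) \/ In x (tvars v) -> s x = s' x).
  { intros x Hx; apply Hss', in_gvars.
    exists (AEq u v); split; [apply (in_map (fun e => AEq (fst e) (snd e)) E (u, v) Huv)|].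
    apply in_app_iff, Hx. }
  rewrite <- (tsubst_ext s s' u), <- (tsubst_ext s s' v); auto.
Qed.

Lemma unifies_sys_subst (s k : subst) (E : list (term * term)) :
  unifies s (sys_subst k E) <-> unifies (scomp k s) E.
Proof.
  unfold unifies, sys_subst; rewrite Forall_map.
  split; apply Forall_impl; intros [u v]; simpl; rewrite !tsubst_comp; auto.
Qed.

Lemma unifies_scomp (s r : subst) (E : list (term * term)) :
  unifies s E -> unifies (scomp s r) E.
Proof.
  apply Forall_impl; intros [u v]; simpl; rewrite <- !tsubst_comp; congruence.
Qed.

Lemma unifies_combine (s : subst) (ts us : list term) :
  length ts = length us ->
  (unifies s (combine ts us) <-> map (tsubst s) ts = map (tsubst s) us).
Proof.
  revert us; induction ts as [|t ts IH]; intros [|u us] Hlen; simpl in *;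
    try discriminate; [split; constructor|].
  unfold unifies in *; simpl; rewrite Forall_cons_iff, IH by lia; simpl; split.
  - intros [-> ->]; reflexivity.
  - intros Heq; injection Heq; auto.
Qed.

Lemma in_sys_vars_combine (ts us : list term) (z : nat) :
  In z (sys_vars (combine ts us)) -> In z (flat_map tvars ts) \/ In z (flat_map tvars us).
Proof.
  revert us; induction ts as [|t ts IH]; intros [|u us] Hz; simpl in *; try tauto.
  rewrite !in_app_iff.
  apply in_sys_vars_cons in Hz as [Hz|[Hz|Hz]]; auto.
  apply IH in Hz; tauto.
Qed.

Record sys_mgu (E : list (term * term)) (mu : subst) : Prop := {
  sys_mgu_unifies : unifies mu E;
  sys_mgu_general : forall s, unifies s E -> exists e, forall x, s x = tsubst e (mu x);
  sys_mgu_dom : forall x, mu x <> Var x -> In x (sys_vars E);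
  sys_mgu_range : forall x y, mu x <> Var x -> In y (tvars (mu x)) -> In y (sys_vars E);
  sys_mgu_range_fixed : forall x y, In y (tvars (mu x)) -> mu y = Var y }.

Lemma var_dec (u : term) (x : nat) : {u = Var x} + {u <> Var x}.
Proof.
  destruct u as [y|f ts]; [|right; discriminate].
  destruct (Nat.eq_dec y x) as [->|Hyx]; [left; reflexivity | right; congruence].
Qed.

Lemma sys_mgu_nil : sys_mgu [] Var.
Proof.
  split; try (intros x Hx; contradiction).
  - constructor.
  - intros s _; exists s; reflexivity.
  - intros x y [<-|[]]; reflexivity.
Qed.

Lemma sys_mgu_var_refl (x : nat) (E : list (term * term)) (mu : subst) :
  sys_mgu E mu -> sys_mgu ((Var x, Var x) :: E) mu.
Proof.
  intros [Hunif Hgen Hdom Hran Hfix]; split; auto.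
  - constructor; auto.
  - intros s Hs; apply Hgen; inversion Hs; auto.
  - intros y Hy; apply in_sys_vars_cons; auto.
  - intros y z Hy Hz; apply in_sys_vars_cons; eauto.
Qed.

Lemma sys_mgu_swap (u v : term) (E : list (term * term)) (mu : subst) :
  sys_mgu ((u, v) :: E) mu -> sys_mgu ((v, u) :: E) mu.
Proof.
  intros [Hunif Hgen Hdom Hran Hfix]; inversion Hunif; split; auto.
  - constructor; auto.
  - intros s Hs; inversion Hs; apply Hgen; constructor; auto.
  - intros y Hy; apply Hdom in Hy; rewrite in_sys_vars_cons in *; tauto.
  - intros y z Hy Hz; eapply Hran in Hz; eauto; rewrite in_sys_vars_cons in *; tauto.
Qed.

Lemma sys_mgu_decompose (f : nat) (ts us : list term) (E : list (term * term)) (mu : subst) :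
  length ts = length us ->
  sys_mgu (combine ts us ++ E) mu -> sys_mgu ((Fn f ts, Fn f us) :: E) mu.
Proof.
  intros Hlen [Hunif Hgen Hdom Hran Hfix].
  assert (Hvars : forall z, In z (sys_vars (combine ts us ++ E)) ->
                            In z (sys_vars ((Fn f ts, Fn f us) :: E))).
  { intros z Hz; apply in_sys_vars_cons; simpl.
    apply in_sys_vars_app in Hz as [Hz|Hz]; auto.
    apply in_sys_vars_combine in Hz; tauto. }
  apply unifies_app in Hunif as [Hts HE].
  split; eauto.
  - constructor; [simpl; f_equal; apply unifies_combine|]; auto.
  - intros s Hs; inversion Hs as [|? ? Hfn HsE]; simpl in Hfn; injection Hfn as Hfn.
    apply Hgen, unifies_app; split; [apply unifies_combine|]; auto.
Qed.

Definition bind (x : nat) (t : term) : subst :=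
  fun y => if Nat.eqb y x then t else Var y.

Lemma bind_eq (x : nat) (t : term) : bind x t x = t.
Proof. unfold bind; rewrite Nat.eqb_refl; reflexivity. Qed.

Lemma bind_neq (x y : nat) (t : term) : y <> x -> bind x t y = Var y.
Proof. intros Hyx; unfold bind; apply Nat.eqb_neq in Hyx; rewrite Hyx; reflexivity. Qed.

Lemma unifier_bind (s : subst) (x : nat) (t : term) :
  s x = tsubst s t -> forall y, tsubst s (bind x t y) = s y.
Proof.
  intros Hx y; destruct (Nat.eq_dec y x) as [->|Hyx].
  - rewrite bind_eq; auto.
  - rewrite bind_neq; auto.
Qed.

Lemma in_tvars_bind (x : nat) (t u : term) (z : nat) :
  ~ In x (tvars t) -> In z (tvars (tsubst (bind x t) u)) ->
  z <> x /\ (In z (tvars u) \/ In z (tvars t)).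
Proof.
  intros Hx Hz; apply in_tvars_tsubst in Hz as [y [Hy Hz]].
  destruct (Nat.eq_dec y x) as [->|Hyx].
  - rewrite bind_eq in Hz; split; [intros ->|]; auto.
  - rewrite bind_neq in Hz by exact Hyx; destruct Hz as [<-|[]]; auto.
Qed.

Lemma in_sys_vars_bind (x : nat) (t : term) (E : list (term * term)) (z : nat) :
  ~ In x (tvars t) -> In z (sys_vars (sys_subst (bind x t) E)) ->
  z <> x /\ (In z (sys_vars E) \/ In z (tvars t)).
Proof.
  intros Hx; induction E as [|[u v] E IH]; simpl; [tauto|].
  rewrite !in_sys_vars_cons; intros [Hz|[Hz|Hz]];
    [apply in_tvars_bind in Hz | apply in_tvars_bind in Hz | apply IH in Hz]; tauto.
Qed.

Lemma sys_mgu_bind (x : nat) (t : term) (E : list (term * term)) (mu : subst) :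
  ~ In x (tvars t) -> sys_mgu (sys_subst (bind x t) E) mu ->
  sys_mgu ((Var x, t) :: E) (scomp (bind x t) mu).
Proof.
  intros Hx [Hunif Hgen Hdom Hran Hfix].
  assert (Hvars : forall z, In z (sys_vars (sys_subst (bind x t) E)) ->
                            In z (sys_vars ((Var x, t) :: E)) /\ z <> x).
  { intros z Hz; apply in_sys_vars_bind in Hz as [Hzx Hz]; auto.
    rewrite in_sys_vars_cons; tauto. }
  assert (Hbind_fixed : forall y z, In z (tvars (bind x t y)) -> z <> x /\
            (In z (tvars t) \/ (z = y /\ scomp (bind x t) mu y = mu y))).
  { intros y z Hz; destruct (Nat.eq_dec y x) as [->|Hyx].
    - rewrite bind_eq in Hz; split; [intros ->|]; auto.
    - unfold scomp; rewrite (bind_neq x y t Hyx) in *.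
      destruct Hz as [<-|[]]; auto. }
  split.
  - constructor.
    + simpl; unfold scomp at 1; rewrite bind_eq, <- tsubst_comp.
      rewrite (tsubst_id_on (bind x t) t); [reflexivity|].
      intros y Hy; apply bind_neq; congruence.
    + apply unifies_sys_subst, Hunif.
  - intros s Hs; inversion Hs as [|? ? Hst HsE]; simpl in Hst.
    destruct (Hgen s) as [e He].
    { apply unifies_sys_subst; eapply unifies_ext; [|exact HsE].
      intros y _; symmetry; apply unifier_bind, Hst. }
    exists e; intros y; rewrite <- (unifier_bind s x t Hst y).
    unfold scomp; rewrite tsubst_comp; apply tsubst_ext; intros; apply He.
  - intros y Hy; apply in_sys_vars_cons; destruct (Nat.eq_dec y x) as [->|Hyx].
    { left; left; reflexivity. }
    unfold scomp in Hy; rewrite bind_neq in Hy by exact Hyx.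
    apply Hdom, Hvars in Hy as [Hy _]; apply in_sys_vars_cons in Hy; exact Hy.
  - intros y z Hy Hz; apply in_tvars_tsubst in Hz as [w [Hw Hz]].
    destruct (var_dec (mu w) w) as [Hmw|Hmw].
    + rewrite Hmw in Hz; destruct Hz as [<-|[]].
      apply Hbind_fixed in Hw as [_ [Hw|[-> Hmy]]]; [apply in_sys_vars_cons; auto|].
      rewrite Hmy in Hy; contradiction.
    + apply Hvars, (Hran w); assumption.
  - intros y z Hz; apply in_tvars_tsubst in Hz as [w [Hw Hz]].
    assert (Hzx : z <> x).
    { destruct (var_dec (mu w) w) as [Hmw|Hmw].
      - rewrite Hmw in Hz; destruct Hz as [<-|[]]; apply Hbind_fixed in Hw; tauto.
      - apply Hvars, (Hran w); assumption. }
    unfold scomp; rewrite bind_neq by exact Hzx; exact (Hfix w z Hz).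
Qed.

Fixpoint tsize (t : term) : nat :=
  match t with
  | Var _ => 1
  | Fn _ ts => S (list_sum (map tsize ts))
  end.

Definition sys_size (E : list (term * term)) : nat :=
  list_sum (map (fun e => tsize (fst e) + tsize (snd e)) E).

Lemma list_sum_map_ge {A : Type} (f : A -> nat) (l : list A) (a : A) :
  In a l -> f a <= list_sum (map f l).
Proof.
  induction l as [|b l IH]; simpl; [tauto|].
  intros [->|Ha]; [lia | specialize (IH Ha); lia].
Qed.

Lemma tsize_var_le (s : subst) (t : term) (x : nat) :
  In x (tvars t) -> tsize (s x) <= tsize (tsubst s t).
Proof.
  induction t as [y|f ts IH] using term_nested_ind; simpl; intros Hx.
  - destruct Hx as [->|[]]; reflexivity.
  - apply in_flat_map in Hx as [u [Hu Hx]]; rewrite Forall_forall in IH.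
    rewrite map_map.
    pose proof (list_sum_map_ge (fun u => tsize (tsubst s u)) ts u Hu).
    specialize (IH u Hu Hx); simpl in *; lia.
Qed.

Lemma occurs_check (s : subst) (x f : nat) (ts : list term) :
  In x (tvars (Fn f ts)) -> tsubst s (Var x) <> tsubst s (Fn f ts).
Proof.
  intros Hx Heq; simpl in Hx; apply in_flat_map in Hx as [u [Hu Hx]].
  pose proof (tsize_var_le s u x Hx) as Hle.
  pose proof (list_sum_map_ge (fun u => tsize (tsubst s u)) ts u Hu) as Hsum.
  apply (f_equal tsize) in Heq; simpl in Heq; rewrite map_map in Heq; lia.
Qed.

Lemma sys_size_combine (ts us : list term) :
  sys_size (combine ts us) <= list_sum (map tsize ts) + list_sum (map tsize us).
Proof.
  unfold sys_size; revert us; induction ts as [|t ts IH]; intros [|u us]; simpl; try lia.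
  specialize (IH us); lia.
Qed.

Lemma sys_size_app (E1 E2 : list (term * term)) :
  sys_size (E1 ++ E2) = sys_size E1 + sys_size E2.
Proof. unfold sys_size; rewrite map_app; apply list_sum_app. Qed.

Definition sys_mgu_exists_below (n : nat) : Prop :=
  forall V E, length V < n -> incl (sys_vars E) V -> (exists s, unifies s E) ->
  exists mu, sys_mgu E mu.

(* Eliminating [x] removes it from the variables of the system, so the bound decreases. *)
Lemma sys_mgu_exists_var (n x : nat) (t : term) (E : list (term * term)) (V : list nat) :
  sys_mgu_exists_below n -> length V < S n -> t <> Var x ->
  incl (sys_vars ((Var x, t) :: E)) V -> (exists s, unifies s ((Var x, t) :: E)) ->
  exists mu, sys_mgu ((Var x, t) :: E) mu.
Proof.
  intros IH HV Ht HEV [s Hs].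
  destruct (in_dec Nat.eq_dec x (tvars t)) as [Hocc|Hnocc].
  - exfalso; inversion Hs as [|? ? Hst _]; destruct t as [y|f ts].
    + destruct Hocc as [->|[]]; contradiction.
    + exact (occurs_check s x f ts Hocc Hst).
  - assert (HxV : In x V) by (apply HEV, in_sys_vars_cons; left; left; reflexivity).
    destruct (IH (remove Nat.eq_dec x V) (sys_subst (bind x t) E)) as [mu Hmu].
    + pose proof (remove_length_lt Nat.eq_dec V x HxV); lia.
    + intros z Hz; apply in_sys_vars_bind in Hz as [Hzx Hz]; [|exact Hnocc].
      apply in_in_remove; [exact Hzx|]; apply HEV, in_sys_vars_cons; tauto.
    + inversion Hs as [|? ? Hst HsE]; exists s; apply unifies_sys_subst.
      eapply unifies_ext; [|exact HsE].
      intros y _; symmetry; apply unifier_bind, Hst.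
    + exists (scomp (bind x t) mu); apply sys_mgu_bind; assumption.
Qed.

(* Martelli-Montanari, by induction on the number of variables, then on the size. *)
Lemma sys_mgu_exists_lt (n : nat) : sys_mgu_exists_below n.
Proof.
  induction n as [|n IHn]; intros V E HV; [lia|].
  remember (sys_size E) as m eqn:Hm; revert E Hm.
  induction m as [m IHm] using (well_founded_induction lt_wf).
  intros [|[u v] E] Hm HEV Hunif; [exists Var; apply sys_mgu_nil|].
  assert (Hsub : forall E', incl (sys_vars E') (sys_vars ((u, v) :: E)) -> incl (sys_vars E') V)
    by (intros E' HE' z Hz; apply HEV, HE', Hz).
  destruct Hunif as [s Hs]; pose proof (proj1 (Forall_cons_iff _ _ _) Hs) as [Huv HsE].
  simpl in Huv.
  destruct u as [x|f ts].
  - destruct (var_dec v x) as [->|Hvx].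
    + destruct (IHm (sys_size E)) with (E := E) as [mu Hmu]; eauto.
      * subst m; unfold sys_size; simpl; lia.
      * apply Hsub; intros z Hz; apply in_sys_vars_cons; auto.
      * exists mu; apply sys_mgu_var_refl, Hmu.
    + apply (sys_mgu_exists_var n x v E V); eauto.
  - destruct v as [y|g us].
    + destruct (sys_mgu_exists_var n y (Fn f ts) E V) as [mu Hmu]; try discriminate; auto.
      * apply Hsub; intros z Hz; rewrite in_sys_vars_cons in *; tauto.
      * exists s; constructor; auto.
      * exists mu; apply sys_mgu_swap, Hmu.
    + injection Huv as <- Hts.
      assert (Hlen : length ts = length us)
        by (rewrite <- (length_map (tsubst s) ts), Hts, length_map; reflexivity).
      destruct (IHm (sys_size (combine ts us ++ E))) with (E := combine ts us ++ E)
        as [mu Hmu]; eauto.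
      * subst m; rewrite sys_size_app; pose proof (sys_size_combine ts us).
        unfold sys_size at 3; simpl; unfold sys_size in *; lia.
      * apply Hsub; intros z Hz; apply in_sys_vars_cons; simpl.
        apply in_sys_vars_app in Hz as [Hz|Hz]; [apply in_sys_vars_combine in Hz|]; tauto.
      * exists s; apply unifies_app; split; [apply unifies_combine|]; auto.
      * exists mu; apply sys_mgu_decompose; assumption.
Qed.

Lemma sys_mgu_exists (E : list (term * term)) :
  (exists s, unifies s E) -> exists mu, sys_mgu E mu.
Proof.
  apply (sys_mgu_exists_lt (S (length (sys_vars E))) (sys_vars E)); auto using incl_refl.
Qed.

Lemma sys_mgu_idempotent (E : list (term * term)) (mu : subst) :
  sys_mgu E mu -> idempotent mu.
Proof.
  intros Hmu x; apply tsubst_id_on; intros y Hy; exact (sys_mgu_range_fixed _ _ Hmu x y Hy).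
Qed.

Lemma term_mgu_exists (s : subst) (t1 t2 : term) :
  tsubst s t1 = tsubst s t2 -> exists mu, rel_idem_mgu tsubst tvars mu t1 t2.
Proof.
  intros Hs; destruct (sys_mgu_exists [(t1, t2)]) as [mu Hmu].
  { exists s; constructor; auto. }
  exists mu; pose proof (sys_mgu_idempotent _ _ Hmu).
  destruct Hmu as [Hunif Hgen Hdom Hran _]; rewrite sys_vars_single in *.
  repeat split; eauto.
  - inversion Hunif; assumption.
  - intros s' Hs'; apply Hgen; constructor; auto.
Qed.

Lemma pred_unifier_iff (s : subst) (p q : nat) (ts us : list term) :
  is_unifier asubst s (APred p ts) (APred q us) <-> is_unifier tsubst s (Fn p ts) (Fn q us).
Proof. unfold is_unifier; simpl; split; intros Heq; injection Heq as -> ->; reflexivity. Qed.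

Lemma pred_mgu_exists (s : subst) (p q : nat) (ts us : list term) :
  asubst s (APred p ts) = asubst s (APred q us) ->
  exists mu, rel_idem_mgu asubst avars mu (APred p ts) (APred q us).
Proof.
  intros Hs; apply pred_unifier_iff in Hs.
  destruct (term_mgu_exists s (Fn p ts) (Fn q us) Hs) as [mu [[Hunif Hgen] Hrel]].
  exists mu; split; [split|exact Hrel].
  - apply pred_unifier_iff, Hunif.
  - intros s' Hs'; apply Hgen, pred_unifier_iff, Hs'.
Qed.

Definition apart (c : clause) (g : goal) : Prop :=
  forall x, In x (cvars c) -> ~ In x (gvars g).

Lemma apart_incl (c : clause) (g g' : goal) : incl g' g -> apart c g -> apart c g'.
Proof.
  intros Hincl Hap x Hx Hg; apply (Hap x Hx).
  apply in_gvars in Hg as [a [Ha Hxa]]; apply in_gvars; eauto.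
Qed.

Lemma in_avars_rename (r : nat -> nat) (a : atom) (z : nat) :
  (forall x y, r x = r y -> x = y) ->
  In (r z) (avars (asubst (rename_subst r) a)) <-> In z (avars a).
Proof.
  intros Hr; rewrite in_avars_asubst; split.
  - intros [y [Hy [Hyz|[]]]]; apply Hr in Hyz; subst; exact Hy.
  - intros Hz; exists z; split; [exact Hz | left; reflexivity].
Qed.

Lemma in_gvars_rename (r : nat -> nat) (g : goal) (z : nat) :
  (forall x y, r x = r y -> x = y) ->
  In (r z) (gvars (gsubst (rename_subst r) g)) <-> In z (gvars g).
Proof.
  intros Hr; rewrite in_gvars_gsubst; split.
  - intros [y [Hy [Hyz|[]]]]; apply Hr in Hyz; subst; exact Hy.
  - intros Hz; exists z; split; [exact Hz | left; reflexivity].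
Qed.

Lemma in_cvars_rename (r : nat -> nat) (c : clause) (z : nat) :
  In z (cvars (rename_clause r c)) <-> exists x, In x (cvars c) /\ z = r x.
Proof.
  change (cvars (rename_clause r c)) with
    (avars (asubst (rename_subst r) (Defs.hd c)) ++ gvars (gsubst (rename_subst r) (bd c))).
  unfold cvars; rewrite in_app_iff, in_avars_asubst, in_gvars_gsubst; split.
  - intros [[x [Hx [<-|[]]]]|[x [Hx [<-|[]]]]]; exists x; rewrite in_app_iff; auto.
  - intros [x [Hx ->]]; apply in_app_iff in Hx as [Hx|Hx]; [left|right];
      exists x; (split; [exact Hx | left; reflexivity]).
Qed.

Lemma fresh_renaming (g : goal) (c : clause) :
  exists r, (forall x y, r x = r y -> x = y) /\ apart (rename_clause r c) g.
Proof.
  exists (fun x => x + S (list_max (gvars g))); split; [intros; lia|].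
  intros z Hz Hg; apply in_cvars_rename in Hz as [x [_ ->]].
  assert (Hmax : list_max (gvars g) <= list_max (gvars g)) by reflexivity.
  apply list_max_le in Hmax; rewrite Forall_forall in Hmax.
  specialize (Hmax _ Hg); lia.
Qed.

Lemma extend_through_renaming (r : nat -> nat) (l : list nat) (f g : subst) :
  (forall x y, r x = r y -> x = y) ->
  exists h, (forall x, In x l -> h (r x) = f x) /\
            (forall y, (forall x, In x l -> y <> r x) -> h y = g y).
Proof.
  intros Hr.
  exists (fun y => match find (fun x => Nat.eqb (r x) y) l with
                   | Some x => f x
                   | None => g y
                   end); split.
  - intros x Hx; destruct (find (fun x' => Nat.eqb (r x') (r x)) l) as [x'|] eqn:Hfind.
    + apply find_some in Hfind as [_ Hx']; apply Nat.eqb_eq, Hr in Hx'; subst; reflexivity.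
    + apply (find_none _ _ Hfind) in Hx; rewrite Nat.eqb_refl in Hx; discriminate.
  - intros y Hy; destruct (find (fun x => Nat.eqb (r x) y) l) as [x|] eqn:Hfind; [|reflexivity].
    apply find_some in Hfind as [Hx Hxy]; apply Nat.eqb_eq in Hxy.
    exfalso; exact (Hy x Hx (eq_sym Hxy)).
Qed.

Lemma hd_rename_instance (r : nat -> nat) (c : clause) (h f : subst) :
  (forall x, In x (cvars c) -> h (r x) = f x) ->
  asubst h (Defs.hd (rename_clause r c)) = asubst f (Defs.hd c).
Proof.
  intros Hhf; change (Defs.hd (rename_clause r c)) with (asubst (rename_subst r) (Defs.hd c)).
  rewrite asubst_comp; apply asubst_ext; intros x Hx; apply Hhf, in_app_iff; auto.
Qed.

Lemma bd_rename_instance (r : nat -> nat) (c : clause) (h f : subst) :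
  (forall x, In x (cvars c) -> h (r x) = f x) ->
  gsubst h (bd (rename_clause r c)) = gsubst f (bd c).
Proof.
  intros Hhf; change (bd (rename_clause r c)) with (gsubst (rename_subst r) (bd c)).
  rewrite gsubst_comp; apply gsubst_ext; intros x Hx; apply Hhf, in_app_iff; auto.
Qed.

Lemma input_args_map (M : mode) (p : nat) (f : term -> term) (ts : list term) :
  input_args M p (map f ts) = map f (input_args M p ts).
Proof.
  unfold input_args; destruct (M p) as [ms|]; [|reflexivity].
  rewrite length_map; destruct (Nat.eqb (length ms) (length ts)); [|reflexivity].
  clear; revert ts; induction ms as [|[|] ms IH]; intros [|t ts]; simpl; f_equal; auto.
Qed.

Lemma safe_clause_rename (M : mode) (r : nat -> nat) (c : clause) :
  (forall x y, r x = r y -> x = y) -> safe_clause M c -> safe_clause M (rename_clause r c).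
Proof.
  intros Hr Hsafe B1 B2 t1 t2 Hbd x Hx.
  apply map_eq_app in Hbd as [B1' [L [Hbd [HB1 HL]]]].
  apply map_eq_cons in HL as [a [B2' [-> [Ha HB2]]]]; subst B1 B2.
  destruct a as [| u1 u2 |]; try discriminate; injection Ha as <- <-.
  apply (in_avars_asubst (rename_subst r) (ANeq u1 u2)) in Hx as [z [Hz [<-|[]]]].
  destruct (Hsafe B1' B2' u1 u2 Hbd z Hz) as [Hin|Hlocal]; [left|right].
  - unfold input_var_of_head in *; simpl; rewrite input_args_map.
    apply in_flat_map in Hin as [t [Ht Hzt]]; apply in_flat_map.
    exists (tsubst (rename_subst r) t); split; [apply in_map, Ht|].
    apply in_tvars_tsubst; exists z; split; [exact Hzt | left; reflexivity].
  - change (avars (Defs.hd (rename_clause r c))) with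
      (avars (asubst (rename_subst r) (Defs.hd c))).
    fold (gsubst (rename_subst r) B1') (gsubst (rename_subst r) B2').
    rewrite !in_app_iff, in_avars_rename, !in_gvars_rename by exact Hr.
    rewrite !in_app_iff in Hlocal; exact Hlocal.
Qed.

Lemma safe_clause_diseq_var (M : mode) (c : clause) (d : atom) (y : nat) :
  safe_clause M c -> In d (bd c) -> is_disequation d -> In y (avars d) ->
  input_var_of_head M c y \/
  (~ In y (avars (Defs.hd c)) /\
   forall b, In b (bd c) -> ~ is_disequation b -> ~ In y (avars b)).
Proof.
  intros Hsafe Hd Hdd Hy; destruct d as [|t1 t2|]; try contradiction.
  apply in_split in Hd as [B1 [B2 HB]].
  destruct (Hsafe B1 B2 t1 t2 HB y Hy) as [Hin|Hlocal]; [left; exact Hin | right].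
  rewrite !in_app_iff in Hlocal; split; [tauto|].
  intros b Hb Hbd Hyb; rewrite HB in Hb; apply in_app_iff in Hb as [Hb|[<-|Hb]].
  - apply Hlocal; right; left; apply in_gvars; eauto.
  - apply Hbd; exact I.
  - apply Hlocal; right; right; apply in_gvars; eauto.
Qed.

Lemma is_disequation_asubst (s : subst) (a : atom) :
  is_disequation (asubst s a) <-> is_disequation a.
Proof. destruct a; simpl; tauto. Qed.

Lemma nonbasic_asubst (s : subst) (a : atom) : nonbasic (asubst s a) <-> nonbasic a.
Proof. destruct a; simpl; tauto. Qed.

Lemma satisfies_asubst (M : mode) (s : subst) (a : atom) :
  satisfies M a -> satisfies M (asubst s a).
Proof.
  destruct a as [| |p ts]; simpl; try tauto.
  intros [[ms [Hms Hlen]] Hground]; split.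
  - exists ms; rewrite length_map; auto.
  - intros t Ht; rewrite input_args_map in Ht; apply in_map_iff in Ht as [u [<- Hu]].
    rewrite tsubst_ground; auto.
Qed.

Lemma unifier_grounds_input_vars (M : mode) (k : subst) (p : nat) (ts : list term)
    (c : clause) (y : nat) :
  satisfies M (APred p ts) -> asubst k (APred p ts) = asubst k (Defs.hd c) ->
  input_var_of_head M c y -> tvars (k y) = [].
Proof.
  intros [_ Hground] Hk Hy; simpl in Hk; injection Hk as Hp Hts.
  apply in_flat_map in Hy as [t [Ht Hyt]].
  assert (Hkt : In (tsubst k t) (input_args M p (map (tsubst k) ts))).
  { rewrite Hts, Hp, input_args_map; apply in_map, Ht. }
  rewrite input_args_map in Hkt; apply in_map_iff in Hkt as [u [Hu Hu']].
  rewrite tsubst_ground in Hu by exact (Hground u Hu').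
  apply Hground in Hu'; rewrite Hu in Hu'.
  destruct (tvars (k y)) as [|z zs] eqn:Hky; [reflexivity|].
  assert (Hz : In z (tvars (tsubst k t)))
    by (apply in_tvars_tsubst; exists y; rewrite Hky; split; [exact Hyt | left; reflexivity]).
  unfold ground in Hu'; rewrite Hu' in Hz; contradiction.
Qed.

Definition isolated_in (D B : goal) : Prop :=
  forall d b x, In d D -> is_disequation d -> In b B -> ~ is_disequation b ->
    In x (avars d) -> ~ In x (avars b).

Definition diseqs_isolated (H : goal) (E : list (term * term)) : Prop :=
  isolated_in H (H ++ eq_goal E).

Lemma isolated_in_gsubst (k : subst) (RV : list nat) (D B : goal) :
  (forall y, k y <> Var y -> In y RV) ->
  (forall y z, k y <> Var y -> In z (tvars (k y)) -> In z RV) ->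
  (forall d y, In d D -> is_disequation d -> In y (avars d) ->
     tvars (k y) = [] \/
     (~ In y RV /\ forall b, In b B -> ~ is_disequation b -> ~ In y (avars b))) ->
  isolated_in (gsubst k D) (gsubst k B).
Proof.
  intros Hdom Hran Hvars d b x Hd Hdd Hb Hbd Hxd Hxb.
  apply in_map_iff in Hd as [d0 [<- Hd0]]; apply in_map_iff in Hb as [b0 [<- Hb0]].
  rewrite is_disequation_asubst in Hdd, Hbd.
  apply in_avars_asubst in Hxd as [y [Hy Hxy]].
  destruct (Hvars d0 y Hd0 Hdd Hy) as [Hground|[HyRV Hyb]].
  - rewrite Hground in Hxy; contradiction.
  - assert (Hky : k y = Var y)
      by (destruct (var_dec (k y) y) as [|Hky]; [assumption | contradiction (Hdom y Hky)]).
    rewrite Hky in Hxy; destruct Hxy as [<-|[]].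
    apply in_avars_asubst in Hxb as [w [Hw Hyw]].
    destruct (var_dec (k w) w) as [Hkw|Hkw].
    + rewrite Hkw in Hyw; destruct Hyw as [<-|[]]; exact (Hyb b0 Hb0 Hbd Hw).
    + exact (HyRV (Hran w y Hkw Hyw)).
Qed.

Lemma diseqs_isolated_tail (a : atom) (H : goal) (E : list (term * term)) :
  diseqs_isolated (a :: H) E -> diseqs_isolated H E.
Proof. intros Hiso d b x Hd Hdd Hb; apply (Hiso d b x); simpl; auto. Qed.

Lemma diseqs_isolated_single (a : atom) : diseqs_isolated [a] [].
Proof.
  intros d b x [<-|[]] Hdd Hb Hbd; simpl in Hb.
  destruct Hb as [<-|[]]; contradiction.
Qed.

Lemma diseq_apart_from_eqs (t1 t2 : term) (H : goal) (E : list (term * term)) :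
  diseqs_isolated (ANeq t1 t2 :: H) E ->
  forall x, In x (tvars t1 ++ tvars t2) -> ~ In x (sys_vars E).
Proof.
  intros Hiso x Hx HE; apply in_gvars in HE as [b [Hb Hxb]].
  apply (Hiso (ANeq t1 t2) b x); simpl; auto.
  - right; apply in_app_iff; auto.
  - apply in_map_iff in Hb as [e [<- _]]; simpl; tauto.
Qed.

Lemma diseqs_isolated_eq_step (t1 t2 : term) (H : goal) (E : list (term * term)) (k : subst) :
  diseqs_isolated (AEq t1 t2 :: H) E -> rel_idem_mgu tsubst tvars k t1 t2 ->
  diseqs_isolated (gsubst k H) (sys_subst k E).
Proof.
  intros Hiso [_ [[Hdom Hran] _]].
  unfold diseqs_isolated; rewrite <- gsubst_eq_goal, <- gsubst_app.
  apply (isolated_in_gsubst k (tvars t1 ++ tvars t2)); auto.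
  intros d y Hd Hdd Hy; right; split.
  - apply (Hiso d (AEq t1 t2) y); simpl; auto.
  - intros b Hb Hbd; apply (Hiso d b y); simpl; auto.
Qed.

Lemma diseqs_isolated_pred_step (M : mode) (p : nat) (ts : list term) (H : goal)
    (E : list (term * term)) (c : clause) (k : subst) :
  diseqs_isolated (APred p ts :: H) E -> satisfies M (APred p ts) -> safe_clause M c ->
  apart c (APred p ts :: H ++ eq_goal E) ->
  rel_idem_mgu asubst avars k (APred p ts) (Defs.hd c) ->
  diseqs_isolated (gsubst k (bd c ++ H)) (sys_subst k E).
Proof.
  intros Hiso Hsat Hsafe Hapart [[Hunif _] [[Hdom Hran] _]].
  assert (Hbd_cvars : forall b y, In b (bd c) -> In y (avars b) -> In y (cvars c))
    by (intros b y Hb Hy; apply in_app_iff; right; apply in_gvars; eauto).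
  assert (Hgoal_apart : forall b y, In b (APred p ts :: H ++ eq_goal E) -> In y (avars b) ->
                                    ~ In y (cvars c))
    by (intros b y Hb Hy Hc; apply (Hapart y Hc), in_gvars; eauto).
  unfold diseqs_isolated; rewrite <- gsubst_eq_goal, <- !gsubst_app, <- app_assoc.
  apply (isolated_in_gsubst k (avars (APred p ts) ++ avars (Defs.hd c))); auto.
  intros d y Hd Hdd Hy; apply in_app_iff in Hd as [Hd|Hd].
  - destruct (safe_clause_diseq_var M c d y Hsafe Hd Hdd Hy) as [Hin|[Hhd Hbody]].
    + left; exact (unifier_grounds_input_vars M k p ts c y Hsat Hunif Hin).
    + assert (Hyc : In y (cvars c)) by eauto.
      right; split.
      * rewrite in_app_iff; intros [Hy'|Hy'];
          [exact (Hgoal_apart _ y (or_introl eq_refl) Hy' Hyc) | exact (Hhd Hy')].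
      * intros b Hb Hbd; apply in_app_iff in Hb as [Hb|Hb]; [exact (Hbody b Hb Hbd)|].
        intros Hyb; exact (Hgoal_apart b y (or_intror Hb) Hyb Hyc).
  - assert (Hyc : ~ In y (cvars c))
      by (apply (Hgoal_apart d); [right; apply in_app_iff|]; auto).
    right; split.
    + rewrite in_app_iff; intros [Hy'|Hy'].
      * apply (Hiso d (APred p ts) y); simpl; auto.
      * apply Hyc, in_app_iff; left; exact Hy'.
    + intros b Hb Hbd; apply in_app_iff in Hb as [Hb|Hb].
      * intros Hyb; exact (Hyc (Hbd_cvars b y Hb Hyb)).
      * apply (Hiso d b y); simpl; auto.
Qed.

(* [mgi S X E]: up to variance, [S] is the instance of [X] by an mgu of [E]. *)
Definition mgi (S X : goal) (E : list (term * term)) : Prop :=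
  (exists s, unifies s E /\ S = gsubst s X) /\
  (forall s, unifies s E -> exists r, gsubst s X = gsubst r S).

Lemma mgi_cons_mgu (k : subst) (t1 t2 : term) (S X : goal) (E : list (term * term)) :
  is_mgu tsubst k t1 t2 -> mgi S X ((t1, t2) :: E) <-> mgi S (gsubst k X) (sys_subst k E).
Proof.
  intros [Hk Hkgen].
  assert (Hcons : forall s, unifies s (sys_subst k E) -> unifies (scomp k s) ((t1, t2) :: E)).
  { intros s Hs; constructor; [simpl; rewrite <- !tsubst_comp, Hk; reflexivity|].
    apply unifies_sys_subst, Hs. }
  split.
  - intros [[s [Hs ->]] Hgen]; inversion Hs as [|? ? Ht HsE]; subst.
    destruct (Hkgen s Ht) as [e He]; split.
    + exists e; split.
      * apply unifies_sys_subst; eapply unifies_ext; [|exact HsE]; auto.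
      * rewrite gsubst_comp; apply gsubst_ext; auto.
    + intros s' Hs'; destruct (Hgen _ (Hcons s' Hs')) as [r Hr].
      exists r; rewrite gsubst_comp; exact Hr.
  - intros [[s [Hs ->]] Hgen]; split.
    + exists (scomp k s); split; [exact (Hcons s Hs) | apply gsubst_comp].
    + intros s' Hs'; inversion Hs' as [|? ? Ht HsE]; subst.
      destruct (Hkgen s' Ht) as [e He].
      destruct (Hgen e) as [r Hr].
      { apply unifies_sys_subst; eapply unifies_ext; [|exact HsE]; auto. }
      exists r; rewrite <- Hr, gsubst_comp; apply gsubst_ext; auto.
Qed.

Lemma mgi_eq_step (t1 t2 u1 u2 : term) (X S' : goal) (E : list (term * term)) (nu : subst) :
  mgi (AEq u1 u2 :: S') (AEq t1 t2 :: X) E -> is_mgu tsubst nu u1 u2 ->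
  exists k, rel_idem_mgu tsubst tvars k t1 t2 /\
    mgi (gsubst nu S') (gsubst k X) (sys_subst k E).
Proof.
  intros [[s0 [Hs0 HS]] Hgen] [Hnu Hnugen]; injection HS as Hu1 Hu2 HS'.
  assert (Ht : tsubst (scomp s0 nu) t1 = tsubst (scomp s0 nu) t2)
    by (rewrite <- !tsubst_comp, <- Hu1, <- Hu2; exact Hnu).
  destruct (term_mgu_exists _ _ _ Ht) as [k Hk]; exists k; split; [exact Hk|].
  destruct Hk as [[Hk Hkgen] _]; split.
  - destruct (Hkgen _ Ht) as [e He]; exists e; split.
    + apply unifies_sys_subst; eapply unifies_ext; [|apply unifies_scomp, Hs0]; auto.
    + rewrite HS', !gsubst_comp; apply gsubst_ext; auto.
  - intros s Hs; apply unifies_sys_subst in Hs.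
    destruct (Hgen _ Hs) as [r0 Hr0]; injection Hr0 as Hr1 Hr2 HrX.
    destruct (Hnugen r0) as [e He].
    { unfold is_unifier; rewrite <- Hr1, <- Hr2, <- !tsubst_comp, Hk; reflexivity. }
    exists e; rewrite gsubst_comp, gsubst_comp, HrX; apply gsubst_ext; auto.
Qed.

(* Isolation lets a unifier of [t1 = t2] be glued to a unifier of [E]. *)
Lemma mgi_neq_step (t1 t2 u1 u2 : term) (X S' : goal) (E : list (term * term)) :
  mgi (ANeq u1 u2 :: S') (ANeq t1 t2 :: X) E ->
  (forall x, In x (tvars t1 ++ tvars t2) -> ~ In x (sys_vars E)) ->
  ~ unifiable u1 u2 -> ~ unifiable t1 t2 /\ mgi S' X E.
Proof.
  intros [[s0 [Hs0 HS]] Hgen] Hdisj Hnu; injection HS as Hu1 Hu2 HS'; split.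
  - intros [s Hs].
    set (sg := fun x => if in_dec Nat.eq_dec x (tvars t1 ++ tvars t2) then s x else s0 x).
    assert (Hsg_t : forall t, incl (tvars t) (tvars t1 ++ tvars t2) -> tsubst sg t = tsubst s t).
    { intros t Hincl; apply tsubst_ext; intros x Hx; unfold sg.
      destruct (in_dec _ _ _) as [_|Hn]; [reflexivity | contradiction (Hn (Hincl x Hx))]. }
    destruct (Hgen sg) as [r Hr].
    { eapply unifies_ext; [|exact Hs0]; intros x Hx; unfold sg.
      destruct (in_dec _ _ _) as [Hin|_]; [contradiction (Hdisj x Hin Hx) | reflexivity]. }
    injection Hr as Hr1 Hr2 _; apply Hnu; exists r.
    rewrite <- Hr1, <- Hr2, !Hsg_t; auto using incl_appl, incl_appr, incl_refl.
  - split; [exists s0; auto|].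
    intros s Hs; destruct (Hgen s Hs) as [r Hr]; injection Hr as _ _ Hr; eauto.
Qed.

Section PredStep.

Variables (p p' : nat) (ts us : list term) (X S' : goal) (E : list (term * term)).
Variables (c0 c c' : clause) (r r' : nat -> nat) (nu : subst).
Hypothesis Hmgi : mgi (APred p' us :: S') (APred p ts :: X) E.
Hypothesis Hr : forall x y, r x = r y -> x = y.
Hypothesis Hc : c = rename_clause r c0.
Hypothesis Hc_apart : apart c (APred p' us :: S').
Hypothesis Hnu : is_mgu asubst nu (APred p' us) (Defs.hd c).
Hypothesis Hr' : forall x y, r' x = r' y -> x = y.
Hypothesis Hc' : c' = rename_clause r' c0.
Hypothesis Hc'_apart : apart c' (APred p ts :: X ++ eq_goal E).

Lemma mgi_pred_step_instance :
  exists k, rel_idem_mgu asubst avars k (APred p ts) (Defs.hd c') /\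
    exists e, unifies e (sys_subst k E) /\
              gsubst nu (bd c ++ S') = gsubst e (gsubst k (bd c' ++ X)).
Proof.
  destruct Hmgi as [[s0 [Hs0 HS]] _]; injection HS as Hp Hus HS'.
  (* [phi] acts on [c'] as [nu] acts on [c], and as [s0] followed by [nu] elsewhere. *)
  destruct (extend_through_renaming r' (cvars c0) (fun x => nu (r x)) (scomp s0 nu) Hr')
    as [phi [Hphi_c' Hphi_out]].
  assert (Hphi_goal : forall y, In y (gvars (APred p ts :: X ++ eq_goal E)) ->
                                phi y = scomp s0 nu y).
  { intros y Hy; apply Hphi_out; intros x Hx ->.
    apply (Hc'_apart (r' x)); [subst c'; apply in_cvars_rename; eauto | exact Hy]. }
  assert (Hphi : asubst phi (APred p ts) = asubst phi (Defs.hd c')).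
  { rewrite (asubst_ext phi (scomp s0 nu)), <- asubst_comp
      by (intros y Hy; apply Hphi_goal, in_app_iff; left; exact Hy).
    subst c'; rewrite (hd_rename_instance r' c0 phi (fun x => nu (r x)) Hphi_c').
    simpl asubst at 2; rewrite <- Hp, <- Hus.
    rewrite (proj1 Hnu), Hc; apply hd_rename_instance; reflexivity. }
  destruct (pred_mgu_exists phi p (hd_pred c') ts (hd_args c') Hphi) as [k Hk].
  exists k; split; [exact Hk|].
  destruct Hk as [[_ Hkgen] _]; destruct (Hkgen phi Hphi) as [e He]; exists e; split.
  - apply unifies_sys_subst; eapply unifies_ext; [|apply (unifies_scomp s0 nu), Hs0].
    intros y Hy; change (scomp k e y) with (tsubst e (k y)); rewrite <- He.
    symmetry; apply Hphi_goal.
    apply in_app_iff; right; apply in_gvars_app; right; exact Hy.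
  - rewrite gsubst_comp, (gsubst_ext (scomp k e) phi) by (intros; symmetry; apply He).
    rewrite !gsubst_app; f_equal.
    + subst c c'; rewrite !(bd_rename_instance _ c0 _ (fun x => nu (r x))); auto.
    + rewrite HS', gsubst_comp; apply gsubst_ext; intros y Hy; symmetry.
      apply Hphi_goal, in_app_iff; right; apply in_gvars_app; left; exact Hy.
Qed.

Lemma mgi_pred_step_general (k : subst) :
  is_unifier asubst k (APred p ts) (Defs.hd c') ->
  forall s, unifies s (sys_subst k E) ->
  exists e, gsubst s (gsubst k (bd c' ++ X)) = gsubst e (gsubst nu (bd c ++ S')).
Proof.
  intros Hk s Hs; apply unifies_sys_subst in Hs.
  destruct Hmgi as [_ Hgen]; destruct (Hgen _ Hs) as [r0 Hr0].
  assert (HA : asubst (scomp k s) (APred p ts) = asubst r0 (APred p' us))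
    by (apply (f_equal (fun g => List.hd (APred p ts) g)) in Hr0; exact Hr0).
  assert (HX : gsubst (scomp k s) X = gsubst r0 S')
    by (apply (f_equal (@tl atom)) in Hr0; exact Hr0).
  destruct (extend_through_renaming r (cvars c0) (fun x => scomp k s (r' x)) r0 Hr)
    as [psi [Hpsi_c Hpsi_out]].
  assert (Hpsi_goal : forall y, In y (gvars (APred p' us :: S')) -> psi y = r0 y).
  { intros y Hy; apply Hpsi_out; intros x Hx ->.
    apply (Hc_apart (r x)); [subst c; apply in_cvars_rename; eauto | exact Hy]. }
  destruct (proj2 Hnu psi) as [e He].
  { unfold is_unifier.
    rewrite (asubst_ext psi r0) by (intros y Hy; apply Hpsi_goal, in_app_iff; left; exact Hy).
    rewrite <- HA, <- asubst_comp, Hk, asubst_comp, Hc', Hc.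
    rewrite !(hd_rename_instance _ c0 _ (fun x => scomp k s (r' x))); auto. }
  exists e; rewrite !gsubst_comp, (gsubst_ext (scomp nu e) psi) by (intros; symmetry; apply He).
  rewrite !gsubst_app; f_equal.
  - subst c c'; rewrite !(bd_rename_instance _ c0 _ (fun x => scomp k s (r' x))); auto.
  - rewrite HX; apply gsubst_ext; intros y Hy; symmetry.
    apply Hpsi_goal, in_app_iff; right; exact Hy.
Qed.

Lemma mgi_pred_step :
  exists k, rel_idem_mgu asubst avars k (APred p ts) (Defs.hd c') /\
    mgi (gsubst nu (bd c ++ S')) (gsubst k (bd c' ++ X)) (sys_subst k E).
Proof.
  destruct mgi_pred_step_instance as [k [Hk [e [He HS]]]].
  exists k; split; [exact Hk|]; split; [exists e; auto|].
  intros s Hs; destruct (mgi_pred_step_general k (proj1 (proj1 Hk)) s Hs) as [r0 Hr0]; eauto.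
Qed.

End PredStep.

Section Floundering.

Variables (P : program) (M : mode).

Definition flounders (T : goal) : Prop :=
  exists A G, nonbasic A /\ ~ satisfies M A /\ steps P T (A :: G).

Lemma steps_compose (G1 G2 G3 : goal) : steps P G1 G2 -> steps P G2 G3 -> steps P G1 G3.
Proof. induction 1; eauto using steps. Qed.

Lemma flounders_steps (T T' : goal) : steps P T T' -> flounders T' -> flounders T.
Proof. intros Hsteps [A [G [HA [HnA HT']]]]; exists A, G; eauto using steps_compose. Qed.

Lemma flounders_step (T T' : goal) : step P T T' -> flounders T' -> flounders T.
Proof. intros Hstep; apply flounders_steps; eauto using steps. Qed.

Lemma steps_solve_equations (S K : goal) (E : list (term * term)) :
  mgi S K E -> exists K', steps P (eq_goal E ++ K) K' /\ mgi S K' [].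
Proof.
  revert K; induction E as [E IH] using (induction_ltof1 _ (@length _)); intros K Hmgi.
  destruct E as [|[t1 t2] E]; [exists K; split; [constructor | exact Hmgi]|].
  pose proof Hmgi as [[s [Hs _]] _]; inversion Hs as [|? ? Ht _].
  destruct (term_mgu_exists s t1 t2 Ht) as [k Hk].
  destruct (IH (sys_subst k E)) with (K := gsubst k K) as [K' [Hsteps HK']].
  - unfold ltof, sys_subst; simpl; rewrite length_map; lia.
  - apply (mgi_cons_mgu k t1 t2); [exact (proj1 Hk) | exact Hmgi].
  - exists K'; split; [|exact HK'].
    apply steps_compose with (eq_goal (sys_subst k E) ++ gsubst k K); [|exact Hsteps].
    econstructor; [apply step_eq, Hk|]; rewrite gsubst_app, gsubst_eq_goal; constructor.
Qed.

Lemma steps_equations_first (Eqs : list (term * term)) (R : goal) (A : atom) (G : goal) :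
  steps P (eq_goal Eqs ++ R) (A :: G) -> nonbasic A ->
  exists S, mgi S R Eqs /\ steps P S (A :: G).
Proof.
  revert R; induction Eqs as [Eqs IH] using (induction_ltof1 _ (@length _)); intros R Hsteps HA.
  destruct Eqs as [|[t1 t2] Eqs].
  - exists R; split; [split; [exists Var|] | exact Hsteps].
    + split; [constructor | symmetry; apply gsubst_var].
    + intros s _; exists s; reflexivity.
  - inversion Hsteps as [? Heq|? G' ? Hstep Hsteps']; [subst; contradiction|].
    inversion Hstep as [u1 u2 ? nu Hnu| |]; subst.
    rewrite gsubst_app, gsubst_eq_goal in Hsteps'.
    destruct (IH (sys_subst nu Eqs)) with (R := gsubst nu R) as [S [HS Hsteps_S]]; auto.
    { unfold ltof, sys_subst; simpl; rewrite length_map; lia. }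
    exists S; split; [apply (mgi_cons_mgu nu), HS; apply Hnu | exact Hsteps_S].
Qed.

Definition lifts_floundering (S : goal) : Prop :=
  forall H K E, mgi S (H ++ K) E -> diseqs_isolated H E -> flounders (H ++ eq_goal E ++ K).

(* With nothing before the equations, solving them leads back to a variant of [S]. *)
Lemma lifts_floundering_intro (S : goal) :
  S <> [] ->
  (forall a H K E, mgi S (a :: H ++ K) E -> diseqs_isolated (a :: H) E ->
                   flounders (a :: H ++ eq_goal E ++ K)) ->
  lifts_floundering S.
Proof.
  intros HS Hcons [|a H] K E Hmgi Hiso; [|exact (Hcons a H K E Hmgi Hiso)].
  destruct (steps_solve_equations S K E Hmgi) as [[|a K'] [Hsteps HK']].
  - destruct HK' as [[s [_ ->]] _]; contradiction.
  - apply (flounders_steps _ _ Hsteps), (Hcons a [] K' []);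
      [exact HK' | apply diseqs_isolated_single].
Qed.

Lemma flounders_eq_step (S S1 : goal) (t1 t2 : term) (H K : goal) (E : list (term * term)) :
  step P S S1 -> lifts_floundering S1 ->
  mgi S (AEq t1 t2 :: H ++ K) E -> diseqs_isolated (AEq t1 t2 :: H) E ->
  flounders (AEq t1 t2 :: H ++ eq_goal E ++ K).
Proof.
  intros Hstep Hlift Hmgi Hiso; pose proof Hmgi as [[s0 [_ ->]] _].
  inversion Hstep as [u1 u2 ? nu Hnu| |]; subst.
  destruct (mgi_eq_step t1 t2 _ _ (H ++ K) _ E nu Hmgi (proj1 Hnu)) as [k [Hk Hmgi']].
  eapply flounders_step; [apply step_eq, Hk|].
  rewrite !gsubst_app, gsubst_eq_goal; apply Hlift.
  - rewrite <- gsubst_app; exact Hmgi'.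
  - exact (diseqs_isolated_eq_step _ _ _ _ _ Hiso Hk).
Qed.

Lemma flounders_neq_step (S S1 : goal) (t1 t2 : term) (H K : goal) (E : list (term * term)) :
  step P S S1 -> lifts_floundering S1 ->
  mgi S (ANeq t1 t2 :: H ++ K) E -> diseqs_isolated (ANeq t1 t2 :: H) E ->
  flounders (ANeq t1 t2 :: H ++ eq_goal E ++ K).
Proof.
  intros Hstep Hlift Hmgi Hiso; pose proof Hmgi as [[s0 [_ ->]] _].
  inversion Hstep as [|u1 u2 ? Hnu|]; subst.
  destruct (mgi_neq_step t1 t2 _ _ (H ++ K) _ E Hmgi (diseq_apart_from_eqs _ _ _ _ Hiso) Hnu)
    as [Ht Hmgi'].
  eapply flounders_step; [apply step_neq, Ht|].
  apply Hlift; [exact Hmgi' | exact (diseqs_isolated_tail _ _ _ Hiso)].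
Qed.

Lemma flounders_pred_step (S S1 : goal) (p : nat) (ts : list term) (H K : goal)
    (E : list (term * term)) :
  safe M P -> satisfies M (APred p ts) -> step P S S1 -> lifts_floundering S1 ->
  mgi S (APred p ts :: H ++ K) E -> diseqs_isolated (APred p ts :: H) E ->
  flounders (APred p ts :: H ++ eq_goal E ++ K).
Proof.
  intros Hsafe Hsat Hstep Hlift Hmgi Hiso; pose proof Hmgi as [[s0 [_ ->]] _].
  inversion Hstep as [| |? ? ? c nu [c0 [r [Hc0 [Hr [-> Hc_apart]]]]] Hnu]; subst.
  destruct (fresh_renaming (APred p ts :: H ++ eq_goal E ++ K) c0) as [r' [Hr' Hc'_apart]].
  destruct (mgi_pred_step p p ts (map (tsubst s0) ts) (H ++ K) (gsubst s0 (H ++ K)) E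
              c0 _ _ r r' nu Hmgi Hr eq_refl Hc_apart
              (proj1 Hnu) Hr' eq_refl) as [k [Hk Hmgi']].
  { eapply apart_incl; [|exact Hc'_apart]; intros a; simpl; rewrite !in_app_iff; tauto. }
  eapply flounders_step; [apply step_pred; [exists c0, r'; auto | exact Hk]|].
  rewrite app_assoc, gsubst_app, (gsubst_app k (eq_goal E)), gsubst_eq_goal; apply Hlift.
  - rewrite <- gsubst_app, <- app_assoc; exact Hmgi'.
  - apply (diseqs_isolated_pred_step M p ts H E _ k Hiso Hsat); [| |exact Hk].
    + apply safe_clause_rename; [exact Hr' | exact (Hsafe c0 Hc0)].
    + eapply apart_incl; [|exact Hc'_apart]; intros a; simpl; rewrite !in_app_iff; tauto.
Qed.

Lemma lifts_floundering_steps (S Z : goal) :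
  safe M P -> steps P S Z -> forall A G, Z = A :: G -> nonbasic A -> ~ satisfies M A ->
  lifts_floundering S.
Proof.
  intros Hsafe; induction 1 as [S|S S1 Z Hstep Hsteps IH]; intros A G -> HA HnA.
  - apply lifts_floundering_intro; [discriminate|].
    intros a H K E [[s [_ HS]] _]; injection HS as Ha _.
    exists a, (H ++ eq_goal E ++ K); split; [|split; [|constructor]].
    + apply (nonbasic_asubst s); rewrite <- Ha; exact HA.
    + intros Hsat; apply HnA; rewrite Ha; apply satisfies_asubst, Hsat.
  - apply lifts_floundering_intro; [intros ->; inversion Hstep|].
    specialize (IH A G eq_refl HA HnA).
    intros [t1 t2|t1 t2|p ts] H K E Hmgi Hiso.
    + eapply flounders_eq_step; eauto.
    + eapply flounders_neq_step; eauto.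
    + destruct (classic (satisfies M (APred p ts))) as [Hsat|Hnsat].
      * eapply flounders_pred_step; eauto.
      * exists (APred p ts), (H ++ eq_goal E ++ K); repeat split; auto; constructor.
Qed.

End Floundering.

Theorem lemma2 (P : program) (M : mode) (Eqs : list (term * term)) (G1 : goal) :
  safe M P ->
  (forall a, In a G1 -> ~ is_disequation a) ->
  forall G2 : goal,
    (exists A' G', nonbasic A' /\ ~ satisfies M A' /\
       steps P (map (fun e => AEq (fst e) (snd e)) Eqs ++ G1 ++ G2) (A' :: G')) ->
    (exists A'' G'', nonbasic A'' /\ ~ satisfies M A'' /\
       steps P (G1 ++ map (fun e => AEq (fst e) (snd e)) Eqs ++ G2) (A'' :: G'')).
Proof.
  intros Hsafe HG1 G2 [A' [G' [HA [HnA Hsteps]]]].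
  destruct (steps_equations_first P Eqs (G1 ++ G2) A' G' Hsteps HA) as [S [Hmgi HS]].
  apply (lifts_floundering_steps P M S _ Hsafe HS A' G' eq_refl HA HnA G1 G2 Eqs Hmgi).
  intros d b x Hd Hdd; contradiction (HG1 d Hd Hdd).
Qed.
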